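(* Let $G$ be a graph on $\Pi$ and $A$ the simple closed-above model generated by $G$. Let $i\in[1,n]$. If the $i$-th covering numbers sequence $(s^i_j)_{j\ge1}$ of $G$ satisfies $s^i_j=n$ for some $j$, then $i$-set agreement is solvable on $A$ (in finitely many rounds).
   Context: Fix $\Pi=\{p_1,\dots,p_n\}$. A graph is a directed graph on $\Pi$ containing all self-loops; $Out_G(p)=\{q:(p,q)\in E(G)\}$, $In_G(p)=\{q:(q,p)\in E(G)\}$, $Out_G(P)=\bigcup_{p\in P}Out_G(p)$. Computation proceeds in failure-free, communication-closed rounds: in round $r$ a graph $G_r$ is chosen and each $p$ receives the round-$r$ messages of the processes in $In_{G_r}(p)$. $\uparrow G=\{H:E(H)\supseteq E(G)\}$; the simple closed-above model generated by $G$ allows exactly the executions whose round graphs all lie in $\uparrow G$. In $k$-set agreement each process starts with an input from a totally ordered set $V_{in}$ and must decide a value so that every decided value is some process's input and at most $k$ distinct values are decided; it is solvable on a model if some algorithm guarantees this, with all processes deciding after some fixed finite number of rounds, in every allowed execution and input assignment. $\mathrm{eqdom}(G)=\min\{i\in[1,n]:\forall P\subseteq\Pi,\ |P|=i\Rightarrow Out_G(P)=\Pi\}$ and $\mathrm{cov}_i(G)=\min_{P\subseteq\Pi,|P|=i}|Out_G(P)|$. The $i$-th covering numbers sequence of $G$ is defined by $s^i_1=\mathrm{cov}_i(G)$ and, for $k\ge1$, $s^i_{k+1}=n$ if $s^i_k\ge\mathrm{eqdom}(G)$, and $s^i_{k+1}=\mathrm{cov}_{s^i_k}(G)$ if $s^i_k<\mathrm{eqdom}(G)$.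 *)

From HB Require Import structures.
From mathcomp Require Import all_boot all_order.
Set Implicit Arguments. Unset Strict Implicit. Unset Printing Implicit Defensive.

(* Processes Pi = 'I_n.  A (communication) graph is an edge set on 'I_n. *)
Definition graph_on (n : nat) := {set 'I_n * 'I_n}.

Definition is_graph n (G : graph_on n) : Prop := forall p : 'I_n, (p, p) \in G.

Definition Out n (G : graph_on n) (p : 'I_n) : {set 'I_n} := [set q | (p, q) \in G].
Definition In_ n (G : graph_on n) (p : 'I_n) : {set 'I_n} := [set q | (q, p) \in G].
Definition OutS n (G : graph_on n) (P : {set 'I_n}) : {set 'I_n} :=
  \bigcup_(p in P) Out G p.

Definition in_up n (G H : graph_on n) : bool := G \subset H.

Definition eqdom_prop n (G : graph_on n) (i : nat) : bool :=
  [forall P : {set 'I_n}, (#|P| == i) ==> (OutS G P == setT)].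
Definition eqdom n (G : graph_on n) : nat :=
  head n [seq i <- iota 1 n | eqdom_prop G i].

(* cov_i(G) = min_{|P| = i} |Out_G(P)|  (default n, never used for 1<=i<=n) *)
Definition cov n (G : graph_on n) (i : nat) : nat :=
  \big[minn/n]_(P : {set 'I_n} | #|P| == i) #|OutS G P|.

(* covseq G i k = s^i_{k+1}  (0-based index shift):
   s^i_1 = cov_i(G);
   s^i_{k+1} = n if s^i_k >= eqdom(G), and cov_{s^i_k}(G) otherwise. *)
Fixpoint covseq n (G : graph_on n) (i : nat) (k : nat) : nat :=
  match k with
  | 0 => cov G i
  | k'.+1 => let s := covseq G i k' in
             if eqdom G <= s then n else cov G s
  end.

(* Round r (r = 0,1,...) graph G_r:
   each process p sends msg r p s to all, receives messages of the processes
   in In_{G_r}(p) (None for the others), and updates its state. *)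
Record algorithm (n : nat) (V : Type) := Algorithm {
  S : Type;
  M : Type;
  init : 'I_n -> V -> S;
  msg : nat -> 'I_n -> S -> M;
  trans : nat -> 'I_n -> S -> ('I_n -> option M) -> S;
  decide : 'I_n -> S -> V
}.

Fixpoint run n V (A : algorithm n V) (input : 'I_n -> V)
    (exec : nat -> graph_on n) (r : nat) : 'I_n -> @S n V A :=
  match r with
  | 0 => fun p => @init n V A p (input p)
  | r'.+1 => fun p =>
      let st := run A input exec r' in
      @trans n V A r' p (st p)
        (fun q => if (q, p) \in exec r' then Some (@msg n V A r' q (st q)) else None)
  end.

Definition set_agreement_solvable (n k : nat) d (V : orderType d)
    (G : graph_on n) : Prop :=
  exists (A : algorithm n V) (R : nat),
    forall (input : 'I_n -> V) (exec : nat -> graph_on n),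
      (forall r, in_up G (exec r)) ->
      let dec := fun p => @decide n V A p (run A input exec R p) in
      (forall p, exists q, dec p = input q) /\
      size (undup [seq dec p | p <- enum 'I_n]) <= k.

From HB Require Import structures.
From mathcomp Require Import all_boot all_order.

Set Implicit Arguments. Unset Strict Implicit. Unset Printing Implicit Defensive.

Import Order.TTheory.

(* Every process floods the pair (identifier, input) with the least identifier
   it has heard of and decides the value of that pair.  After r rounds every
   process of Out^r(P), P the set of the i smallest processes, holds an
   identifier of P, so once Out^r(P) is all of Pi at most i values are decided.
   Out^(k+1)(P) has at least s^i_(k+1) elements: a set of size s smaller
   than eqdom(G) has an out-set of size at least cov_s(G), and any larger set
   already dominates every process. *)

Section MinIdFlooding.
Variables (n : nat) (V : Type).

Definition adopt_min (s : 'I_n * V) (rcv : 'I_n -> option ('I_n * V)) :=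
  foldr (fun q (acc : 'I_n * V) =>
           if rcv q is Some m then if m.1 < acc.1 then m else acc else acc)
        s (enum 'I_n).

Lemma adopt_min_le_received s rcv q m :
  rcv q = Some m -> (adopt_min s rcv).1 <= m.1.
Proof.
have : q \in enum 'I_n by rewrite mem_enum.
rewrite /adopt_min; elim: (enum 'I_n) => [|q' l IHl] //=.
rewrite in_cons => /orP[/eqP <- -> | q_l rcv_q].
  by case: ifP => // /negbT; rewrite -leqNgt.
case: (rcv q') => [m'|]; last exact: IHl.
case: ifP => [lt_m' | _]; last exact: IHl.
exact: ltnW (leq_trans lt_m' (IHl q_l rcv_q)).
Qed.

Lemma adopt_min_inv (Q : 'I_n * V -> Prop) s rcv :
  Q s -> (forall q m, rcv q = Some m -> Q m) -> Q (adopt_min s rcv).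
Proof.
move=> Qs Qrcv; rewrite /adopt_min; elim: (enum 'I_n) => [|q l IHl] //=.
by case E: (rcv q) => [m|] //; case: ifP => // _; apply: Qrcv E.
Qed.

Definition min_id_flooding : algorithm n V :=
  @Algorithm n V ('I_n * V)%type ('I_n * V)%type
    (fun p v => (p, v)) (fun _ _ s => s)
    (fun _ _ s rcv => adopt_min s rcv) (fun _ s => s.2).

Variables (input : 'I_n -> V) (exec : nat -> graph_on n).

Local Notation state := (run min_id_flooding input exec).

Lemma run_value_of_id r p : (state r p).2 = input (state r p).1.
Proof.
elim: r p => [|r IHr] p //=.
apply: (adopt_min_inv (Q := fun s => s.2 = input s.1)) => // q m.
by case: ifP => // _ [<-].
Qed.

Lemma run_id_lt (G : graph_on n) (m r : nat) p :
  (forall r, in_up G (exec r)) ->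
  p \in iter r (OutS G) [set q : 'I_n | q < m] -> (state r p).1 < m.
Proof.
move=> execG; elim: r p => [|r IHr] p /=; first by rewrite inE.
case/bigcupP => q /IHr q_lt; rewrite inE => Gqp.
apply: leq_ltn_trans q_lt; apply: (adopt_min_le_received (state r p) (q := q)).
by rewrite /= (subsetP (execG r) _ Gqp).
Qed.

End MinIdFlooding.

Lemma card_ltn_ord n i : i <= n -> #|[set q : 'I_n | q < i]| = i.
Proof.
move=> le_in.
have -> : [set q : 'I_n | q < i] = widen_ord le_in @: setT.
  apply/setP => q; rewrite inE; apply/idP/imsetP => [lt_qi | [j _ ->]].
    by exists (Ordinal lt_qi) => //; apply: val_inj.
  exact: (ltn_ord j).
rewrite card_imset ?cardsT ?card_ord // => j j' /(congr1 val) eq_jj'; exact: val_inj.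
Qed.

Lemma subset_of_card (T : finType) (A : {set T}) m :
  m <= #|A| -> exists2 B : {set T}, B \subset A & #|B| = m.
Proof.
case/card_geqP => s [uniq_s size_s sA]; exists [set x in s].
  by apply/subsetP => x; rewrite inE => /sA.
by rewrite cardsE (card_uniqP uniq_s).
Qed.

Section Covering.
Variables (n : nat) (G : graph_on n).
Hypothesis G_graph : is_graph G.

Lemma OutS_mono (A B : {set 'I_n}) : A \subset B -> OutS G A \subset OutS G B.
Proof.
move=> sAB; apply/subsetP => q /bigcupP[p pA Gpq].
by apply/bigcupP; exists p => //; apply: (subsetP sAB).
Qed.

Lemma sub_OutS (P : {set 'I_n}) : P \subset OutS G P.
Proof. by apply/subsetP => p pP; apply/bigcupP; exists p; rewrite ?inE. Qed.

Lemma eqdom_propP : eqdom_prop G (eqdom G).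
Proof.
rewrite /eqdom; case E: [seq i <- iota 1 n | eqdom_prop G i] => [|a l] /=.
  apply/forallP => P; apply/implyP => /eqP cardP.
  have -> : P = setT.
    by apply/eqP; rewrite eqEcard subsetT cardsT card_ord cardP leqnn.
  by rewrite -subTset sub_OutS.
have : a \in [seq i <- iota 1 n | eqdom_prop G i] by rewrite E mem_head.
by rewrite mem_filter => /andP[].
Qed.

Lemma OutS_eqdom (P : {set 'I_n}) : eqdom G <= #|P| -> OutS G P = setT.
Proof.
case/subset_of_card => Q sQP cardQ.
have OutQ : OutS G Q = setT.
  by have := forallP eqdom_propP Q; rewrite cardQ eqxx => /eqP.
by apply/eqP; rewrite -subTset -OutQ OutS_mono.
Qed.

Lemma cov_le_card_OutS (P : {set 'I_n}) : cov G #|P| <= #|OutS G P|.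
Proof.
have := @bigmin_le_cond _ nat _ n P (fun Q : {set 'I_n} => #|Q| == #|P|).
by apply.
Qed.

Lemma cov_le_card (P : {set 'I_n}) s : s <= #|P| -> cov G s <= #|OutS G P|.
Proof.
case/subset_of_card => Q sQP <-.
exact: leq_trans (cov_le_card_OutS Q) (subset_leq_card (OutS_mono sQP)).
Qed.

Lemma covseq_le_card_iter (P : {set 'I_n}) k :
  covseq G #|P| k <= #|iter k.+1 (OutS G) P|.
Proof.
elim: k => [|k IHk] /=; first exact: cov_le_card_OutS.
case: ifP => [/leq_trans/(_ IHk) | _]; last exact: cov_le_card.
by move/OutS_eqdom ->; rewrite cardsT card_ord.
Qed.

Lemma iter_OutS_setT (P : {set 'I_n}) k :
  covseq G #|P| k = n -> iter k.+1 (OutS G) P = setT.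
Proof.
move=> covk; apply/eqP; rewrite eqEcard subsetT cardsT card_ord -{1}covk.
exact: covseq_le_card_iter.
Qed.

End Covering.

Theorem theorem9 (n : nat) (d : Order.disp_t) (V : orderType d)
  (G : graph_on n) (i : nat) :
  is_graph G -> 1 <= i <= n ->
  (exists k, covseq G i k = n) ->
  set_agreement_solvable i V G.
Proof.
move=> G_graph /andP[_ le_in] [k covk].
exists (min_id_flooding n V), k.+1 => input exec execG.
set state := run (min_id_flooding n V) input exec k.+1 => /=.
set P := [set q : 'I_n | q < i].
have id_in_P p : (state p).1 \in P.
  rewrite inE; apply: run_id_lt execG _.
  by rewrite iter_OutS_setT ?card_ltn_ord ?inE.
split=> [p | ]; first by exists (state p).1; rewrite -run_value_of_id.
rewrite -[i](card_ltn_ord le_in) cardE -(size_map input).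
apply: uniq_leq_size (undup_uniq _) _ => v; rewrite mem_undup => /mapP[p _ ->].
by rewrite run_value_of_id map_f ?mem_enum.
Qed.
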